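(* For any discrete memoryless channel $\mathcal W$ from a finite set $\mathcal X$ to a finite set $\mathcal Y$, $\lim_{\alpha\to1}U_\alpha(\mathcal W)=U(\mathcal W)$ (both one-sided limits exist and equal $U(\mathcal W)$).
   Context: $D(P\|Q)=\sum P\log(P/Q)$ ($0\log(0/q)=0$; $+\infty$ if $P\not\ll Q$); for $\alpha\in(0,1)\cup(1,\infty)$, $D_\alpha(P\|Q)=\frac1{\alpha-1}\log\sum_{x:P(x)>0}P(x)^\alpha Q(x)^{1-\alpha}$ ($+\infty$ if $\alpha>1$ and $P\not\ll Q$). With $P_{XY}(x,y)=P_X(x)\mathcal W(y|x)$: $U(\mathcal W)=\max_{P_X}\min_{Q_Y}D(P_X\times Q_Y\|P_{XY})$ and $U_\alpha(\mathcal W)=\max_{P_X}\min_{Q_Y}D_\alpha(P_X\times Q_Y\|P_{XY})$. *)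

From HB Require Import structures.
From mathcomp Require Import all_boot all_order all_algebra.
From mathcomp Require Import all_classical all_reals all_analysis.
Set Implicit Arguments. Unset Strict Implicit. Unset Printing Implicit Defensive.
Import Order.TTheory GRing.Theory Num.Theory.
Local Open Scope classical_set_scope.
Local Open Scope ring_scope.

Section Defs.
Variable R : realType.

Definition is_dist (T : finType) (P : T -> R) : Prop :=
  (forall t, 0 <= P t) /\ \sum_(t : T) P t = 1.

Definition dists (T : finType) : set (T -> R) := [set P | is_dist P].

(* discrete memoryless channel W(y|x) *)
Definition is_channel (X Y : finType) (W : X -> Y -> R) : Prop :=
  forall x, is_dist (W x).

Definition abs_cont (T : finType) (P Q : T -> R) : bool :=
  [forall t, (0 < P t) ==> (0 < Q t)].

(* KL divergence (natural log), 0 log(0/q) = 0, +oo if not P << Q *)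
Definition KL (T : finType) (P Q : T -> R) : \bar R :=
  if abs_cont P Q then (\sum_(t | 0 < P t) P t * ln (P t / Q t))%:E
  else +oo%E.

Definition renyi_sum (T : finType) (a : R) (P Q : T -> R) : R :=
  \sum_(t | 0 < P t) P t `^ a * Q t `^ (1 - a).

(* Renyi divergence of order a (a in (0,1) u (1,oo)):
   1/(a-1) log sum_{P>0} P^a Q^(1-a); +oo if a > 1 and not P << Q;
   for a < 1 a zero sum gives log 0 = -oo, hence the value +oo. *)
Definition renyi (T : finType) (a : R) (P Q : T -> R) : \bar R :=
  if (1 < a) && ~~ abs_cont P Q then +oo%E
  else if renyi_sum a P Q == 0 then +oo%E
  else ((a - 1)^-1 * ln (renyi_sum a P Q))%:E.

Definition prodPQ (X Y : finType) (P : X -> R) (Q : Y -> R) : X * Y -> R :=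
  fun xy => P xy.1 * Q xy.2.
Definition joint (X Y : finType) (P : X -> R) (W : X -> Y -> R) : X * Y -> R :=
  fun xy => P xy.1 * W xy.1 xy.2.

Definition U (X Y : finType) (W : X -> Y -> R) : \bar R :=
  ereal_sup ((fun P => ereal_inf
     ((fun Q => KL (prodPQ P Q) (joint P W)) @` @dists Y)) @` @dists X).

Definition U_alpha (X Y : finType) (W : X -> Y -> R) (a : R) : \bar R :=
  ereal_sup ((fun P => ereal_inf
     ((fun Q => renyi a (prodPQ P Q) (joint P W)) @` @dists Y)) @` @dists X).

End Defs.

From HB Require Import structures.
From mathcomp Require Import all_boot all_order all_algebra.
From mathcomp Require Import all_classical all_reals all_analysis.
From mathcomp Require Import ring lra.
Set Implicit Arguments.
Unset Strict Implicit.
Unset Printing Implicit Defensive.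
Import Order.TTheory GRing.Theory Num.Theory.
Import numFieldNormedType.Exports.
Local Open Scope classical_set_scope.
Local Open Scope ring_scope.

(* With Z the log-likelihood ratio of P x Q against P_XY, D = E[Z] and
   D_a = ln E[exp((a-1) Z)] / (a-1).  Jensen's inequality gives D_a <= D for a < 1 and
   D <= D_a for a > 1; for a > 1 the bound exp u <= 1 + u + 2u^2 gives
   D_a <= D + O(a-1) uniformly in P and Q, since the second moment of Z is bounded
   independently of them.  Hence U <= U_a <= U + O(a-1) as a -> 1+.
   For a -> 1-, fix P.  Hoelder's inequality bounds the Renyi sum by
   (sum_y E_P[W(y|X)^(1-a)]^(1/(1-a)))^(1-a), and the inner sum tends to the total
   mass G of the geometric means exp E_P[ln W(y|X)].  Taking Q proportional to these
   geometric means gives D(P x Q || P_XY) = -ln G, so min_Q D <= -ln G while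
   min_Q D_a >= -ln G - o(1). *)

Section RealInequalities.
Variable R : realType.
Implicit Types u x p q s : R.

Lemma ln_le_subr1 x : 0 < x -> ln x <= x - 1.
Proof. by move=> x0; have := @le_ln1Dx R (x - 1); rewrite subrKC; apply; lra. Qed.

(* From expR u <= (1 - u)^-1 and (1 - u) (1 + u + 2 u^2) = 1 + u^2 (1 - 2 u). *)
Lemma expR_le_1Dx_sqr u : u <= 2^-1 -> expR u <= 1 + u + 2 * u ^+ 2.
Proof.
move=> hu; have hp : 0 < 1 - u by lra.
have : expR u <= (1 - u)^-1.
  rewrite -[u]opprK expRN opprK lef_pV2 ?posrE ?expR_gt0 //.
  by have := expR_ge1Dx (- u); rewrite addrC.
move=> /le_trans; apply; rewrite -div1r ler_pdivrMr // mulrC -subr_ge0.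
have -> : (1 - u) * (1 + u + 2 * u ^+ 2) - 1 = u ^+ 2 * (1 - 2 * u) by ring.
by apply: mulr_ge0; [exact: sqr_ge0 | lra].
Qed.

(* With q = r^2, q ln^2 q = 4 (r ln r)^2 and 0 <= r (- ln r) <= 1. *)
Lemma mul_ln_sqr_le4 q : 0 < q -> q <= 1 -> q * ln q ^+ 2 <= 4.
Proof.
move=> q0 q1; set r := Num.sqrt q.
have r0 : 0 < r by rewrite sqrtr_gt0.
have rr : r * r = q by rewrite -expr2 sqr_sqrtr // ltW.
have r1 : r <= 1 by rewrite -sqrtr1 ler_sqrt.
have v0 : 0 <= - ln r by rewrite oppr_ge0 ln_le0.
have hrv : r * (- ln r) <= 1.
  have := @ln_le_subr1 r^-1; rewrite invr_gt0 lnV ?posrE // => /(_ r0) hv.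
  have : r * (- ln r) <= r * (r^-1 - 1) by rewrite ler_pM2l.
  by rewrite mulrBr mulfV ?gt_eqF //; lra.
rewrite -rr lnM ?posrE //.
have : 0 <= r * (- ln r) by rewrite mulr_ge0 // ltW.
nra.
Qed.

Lemma powR_inv_1B_le p s : 0 < p -> p <= 1 -> 0 < s -> (1 - p) `^ s^-1 <= s / p.
Proof.
move=> p0 p1 s0; have [->|pn1] := eqVneq p 1.
  by rewrite subrr powR0 ?invr_neq0 ?gt_eqF // divr_ge0 // ltW.
have q0 : 0 < 1 - p by rewrite subr_gt0 lt_neqAle pn1 p1.
have v0 : 0 < p / s by rewrite divr_gt0.
rewrite /powR gt_eqF // -invf_div.
apply: (@le_trans _ _ (expR (- (p / s)))).
  rewrite ler_expR mulrC -mulNr; apply: ler_wpM2r; first by rewrite invr_ge0 ltW.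
  by apply: le_ln1Dx; lra.
rewrite expRN lef_pV2 ?posrE ?expR_gt0 //.
by apply: le_trans (expR_ge1Dx _); lra.
Qed.

End RealInequalities.

Section Moments.
Variables (R : realType) (I : finType) (p : pred I) (w z : I -> R).
Hypotheses (w_ge0 : forall i, p i -> 0 <= w i) (w_sum1 : \sum_(i | p i) w i = 1).

Definition mgf t := \sum_(i | p i) w i * expR (t * z i).

Let m := \sum_(i | p i) w i * z i.

(* Tangent line of the convex function expR at t * m. *)
Lemma jensen_mgf t : expR (t * m) <= mgf t.
Proof.
set E := expR (t * m).
apply: (@le_trans _ _ (\sum_(i | p i) (E * w i + E * t * (w i * z i) - E * t * m * w i))).
  by rewrite sumrB big_split /= -!mulr_sumr w_sum1 -/m; lra.
apply: ler_sum => i pi.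
have e : expR (t * z i) = E * expR (t * (z i - m)) by rewrite -expRD; congr expR; ring.
have : E * (1 + t * (z i - m)) <= E * expR (t * (z i - m)).
  by rewrite ler_pM2l ?expR_gt0 ?expR_ge1Dx.
rewrite e => /(ler_wpM2l (w_ge0 pi)); apply: le_trans.
by rewrite le_eqVlt; apply/orP; left; apply/eqP; ring.
Qed.

Lemma mgf_gt0 t : 0 < mgf t.
Proof. exact: lt_le_trans (expR_gt0 _) (jensen_mgf t). Qed.

Lemma mean_le_ln_mgf t : t * m <= ln (mgf t).
Proof. by rewrite -[leLHS]expRK ler_ln ?posrE ?expR_gt0 ?mgf_gt0 ?jensen_mgf. Qed.

Lemma ln_mgf_le t : (forall i, p i -> t * z i <= 2^-1) ->
  ln (mgf t) <= t * m + 2 * t ^+ 2 * \sum_(i | p i) w i * z i ^+ 2.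
Proof.
move=> tz; rewrite -[leRHS]expRK ler_ln ?posrE ?expR_gt0 ?mgf_gt0 //.
apply: le_trans (expR_ge1Dx _).
apply: (@le_trans _ _ (\sum_(i | p i) (w i + t * (w i * z i) + 2 * t ^+ 2 * (w i * z i ^+ 2)))).
  apply: ler_sum => i pi; have := ler_wpM2l (w_ge0 pi) (expR_le_1Dx_sqr (tz _ pi)).
  move/le_trans; apply; rewrite le_eqVlt; apply/orP; left; apply/eqP; ring.
by rewrite !big_split /= -!mulr_sumr w_sum1 -/m; lra.
Qed.

End Moments.

Lemma powR_invr (R : realType) (x r : R) : 0 < x -> x^-1 `^ r = (x `^ r)^-1.
Proof. by move=> x0; rewrite /powR !gt_eqF ?invr_gt0 // lnV ?posrE // mulrN expRN. Qed.

(* Young's inequality applied to Q^a and T / N^(1-a), with N the sum on the right. *)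
Lemma hoelder_dist (R : realType) (Y : finType) (Q T : Y -> R) a : 0 < a < 1 ->
  is_dist Q -> (forall y, 0 <= T y) ->
  \sum_y Q y `^ a * T y <= (\sum_y T y `^ (1 - a)^-1) `^ (1 - a).
Proof.
move=> /andP[a0 a1] [Q0 Q1] T0; set s := 1 - a; have s0 : 0 < s by rewrite subr_gt0.
set N := \sum_y T y `^ s^-1.
have [N0|Nn0] := eqVneq N 0.
  have T_0 y : T y = 0.
    by apply: powR_eq0_eq0; apply: psumr_eq0P N0 y isT => ? _; exact: powR_ge0.
  by rewrite big1 ?powR_ge0 // => y _; rewrite T_0 mulr0.
have Np : 0 < N by rewrite lt_def Nn0 sumr_ge0 // => y _; exact: powR_ge0.
set c := N `^ s; have cp : 0 < c by rewrite powR_gt0.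
have young y : Q y `^ a * (T y / c) <= Q y * a + T y `^ s^-1 / N * s.
  have ia : 0 < a^-1 by rewrite invr_gt0.
  have is0 : 0 < s^-1 by rewrite invr_gt0.
  have := conjugate_powR (powR_ge0 (Q y) a) (divr_ge0 (T0 y) (ltW cp)) ia is0.
  rewrite !invrK subrKC => /(_ erefl).
  rewrite -powRrM mulfV ?gt_eqF // powRr1 // powRM ?invr_ge0 ?(ltW cp) //.
  by rewrite powR_invr // -powRrM mulfV ?gt_eqF // powRr1 // ltW.
have : \sum_y Q y `^ a * (T y / c) <= \sum_y (Q y * a + T y `^ s^-1 / N * s).
  by apply: ler_sum => y _; exact: young.
rewrite big_split /= -!mulr_suml Q1 -/N mulfV ?gt_eqF // !mul1r /s subrKC => le1.
have -> : \sum_y Q y `^ a * T y = c * \sum_y Q y `^ a * (T y / c).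
  by rewrite mulr_sumr; apply: eq_bigr => y _; field; rewrite gt_eqF.
by rewrite ler_piMr // ltW.
Qed.

Section Distributions.
Variables (R : realType) (T : finType).
Implicit Types (P f g F : T -> R).

Lemma dist_le1 P : is_dist P -> forall t, P t <= 1.
Proof.
move=> [P0 P1] t; rewrite -P1 (bigD1 t) //= lerDl.
by apply: sumr_ge0 => i _; exact: P0.
Qed.

Lemma sum_supp_mul f g : (forall t, 0 <= f t) ->
  \sum_(t | 0 < f t) f t * g t = \sum_t f t * g t.
Proof.
move=> f0; rewrite big_mkcond /=; apply: eq_bigr => t _.
case: ifPn => //; rewrite -leNgt => ft.
have -> : f t = 0 by apply/eqP; rewrite eq_le ft f0.
by rewrite mul0r.
Qed.

Lemma dist_sum_supp P : is_dist P -> \sum_(t | 0 < P t) P t = 1.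
Proof.
move=> [P0 <-]; rewrite big_mkcond /=; apply: eq_bigr => t _.
by case: ifPn => //; rewrite -leNgt => Pt; apply/eqP; rewrite eq_le Pt P0.
Qed.

Lemma ler_sum_pred (p : pred T) F : (forall t, 0 <= F t) ->
  \sum_(t | p t) F t <= \sum_t F t.
Proof. by move=> F0; rewrite big_mkcond /=; apply: ler_sum => t _; case: ifP. Qed.

End Distributions.

Section Channel.
Variables (R : realType) (X Y : finType) (W : X -> Y -> R).
Hypothesis hW : is_channel W.

Lemma channel_ge0 x y : 0 <= W x y. Proof. exact: (hW x).1. Qed.
Lemma channel_le1 x y : W x y <= 1. Proof. exact: dist_le1 (hW x) y. Qed.

Lemma nlnW_ge0 x y : 0 <= - ln (W x y).
Proof. by rewrite oppr_ge0 ln_le0 // channel_le1. Qed.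

(* A crude bound for max -ln W(y|x) over the support of W. *)
Definition nlnW_sum := \sum_(t : X * Y | 0 < W t.1 t.2) - ln (W t.1 t.2).

Lemma nlnW_le_sum {x y} : 0 < W x y -> - ln (W x y) <= nlnW_sum.
Proof.
move=> Wxy; rewrite /nlnW_sum (bigD1 (x, y)) //= lerDl.
by apply: sumr_ge0 => t _; exact: nlnW_ge0.
Qed.

Lemma lnW_sqr_le {x y} : 0 < W x y -> ln (W x y) ^+ 2 <= nlnW_sum ^+ 2.
Proof.
move=> Wxy; rewrite -sqrrN lerXn2r ?nnegrE ?nlnW_ge0 ?nlnW_le_sum //.
exact: le_trans (nlnW_ge0 x y) (nlnW_le_sum Wxy).
Qed.

Definition llr_mom2_bound := \sum_(t : X * Y) (8 + 2 * nlnW_sum ^+ 2).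

Section InputOutput.
Variables (P : X -> R) (Q : Y -> R).
Hypotheses (hP : is_dist P) (hQ : is_dist Q).

Let w := prodPQ P Q.
Let supp t := 0 < w t.

(* log of the likelihood ratio (P x Q) / P_XY *)
Definition llr (t : X * Y) := ln (Q t.2) - ln (W t.1 t.2).

Lemma prodPQ_ge0 t : 0 <= w t.
Proof. by rewrite mulr_ge0 //; [exact: hP.1 | exact: hQ.1]. Qed.

Lemma prodPQ_dist : is_dist w.
Proof.
split; first exact: prodPQ_ge0.
rewrite /w /prodPQ -(pair_bigA _ (fun x y => P x * Q y)) /=.
by under eq_bigr do rewrite -mulr_sumr hQ.2 mulr1; exact: hP.2.
Qed.

Lemma prodPQ_gt0 {t} : supp t -> 0 < P t.1 /\ 0 < Q t.2.
Proof. by rewrite /supp /w /prodPQ mulr_ge0_gt0 ?(hP.1, hQ.1) // => /andP. Qed.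

Lemma abs_cont_channel_gt0 {t} : abs_cont w (joint P W) -> supp t -> 0 < W t.1 t.2.
Proof.
move=> /forallP /(_ t) /implyP ac wt; have := ac wt.
by rewrite /joint mulr_ge0_gt0 ?(hP.1, channel_ge0) // => /andP[].
Qed.

Let w_supp_ge0 t : supp t -> 0 <= w t. Proof. by move=> _; exact: prodPQ_ge0. Qed.
Let w_supp_sum1 : \sum_(t | supp t) w t = 1. Proof. exact: dist_sum_supp prodPQ_dist. Qed.

Lemma KL_llr : abs_cont w (joint P W) ->
  KL w (joint P W) = (\sum_(t | supp t) w t * llr t)%:E.
Proof.
move=> ac; rewrite /KL ac; congr EFin; apply: eq_bigr => t wt.
have [[P0 Q0] W0] := (prodPQ_gt0 wt, abs_cont_channel_gt0 ac wt).
by rewrite /llr /joint /w /prodPQ ln_div ?posrE ?mulr_gt0 // !lnM ?posrE //; congr (_ * _); ring.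
Qed.

Lemma renyi_llr a : abs_cont w (joint P W) ->
  renyi a w (joint P W) = ((a - 1)^-1 * ln (mgf supp w llr (a - 1)))%:E.
Proof.
move=> ac; rewrite /renyi ac andbF.
have -> : renyi_sum a w (joint P W) = mgf supp w llr (a - 1).
  apply: eq_bigr => t wt.
  have [[P0 Q0] W0] := (prodPQ_gt0 wt, abs_cont_channel_gt0 ac wt).
  rewrite /powR !gt_eqF ?mulr_gt0 // -expRD -[X in _ = X * _](@lnK _ (w t)) ?posrE //.
  by rewrite -expRD /llr /joint /w /prodPQ !lnM ?posrE //; congr expR; ring.
by rewrite gt_eqF ?mgf_gt0.
Qed.

Lemma llr_le t : supp t -> 0 < W t.1 t.2 -> llr t <= nlnW_sum.
Proof.
move=> wt W0; have [_ Q0] := prodPQ_gt0 wt.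
have := nlnW_le_sum W0; have : ln (Q t.2) <= 0 by rewrite ln_le0 // dist_le1.
by rewrite /llr; lra.
Qed.

Lemma llr_sqr_le t : supp t -> 0 < W t.1 t.2 -> w t * llr t ^+ 2 <= 8 + 2 * nlnW_sum ^+ 2.
Proof.
move=> wt W0; have [P0 Q0] := prodPQ_gt0 wt.
have P1 := dist_le1 hP t.1; have Q1 := dist_le1 hQ t.2.
have hA := mul_ln_sqr_le4 Q0 Q1; have hB := lnW_sqr_le W0.
rewrite /w /prodPQ /llr; set A := ln (Q t.2) in hA *; set B := ln (W t.1 t.2) in hB *.
set p := P t.1 in P0 P1 *; set q := Q t.2 in Q0 Q1 hA *.
have h1 : 0 <= (1 - p) * q * (A - B) ^+ 2.
  by apply: mulr_ge0; [apply: mulr_ge0; lra | exact: sqr_ge0].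
have h2 : 0 <= q * (A + B) ^+ 2 by apply: mulr_ge0; [lra | exact: sqr_ge0].
have h3 : 0 <= (1 - q) * B ^+ 2 by apply: mulr_ge0; [lra | exact: sqr_ge0].
lra.
Qed.

Lemma renyi_le_KL a : a < 1 -> (renyi a w (joint P W) <= KL w (joint P W))%E.
Proof.
move=> a1; case ac : (abs_cont w (joint P W)); last by rewrite /KL ac leey.
rewrite KL_llr // renyi_llr // lee_fin ler_ndivrMl ?subr_lt0 //.
exact: mean_le_ln_mgf.
Qed.

Lemma KL_le_renyi a : 1 < a -> (KL w (joint P W) <= renyi a w (joint P W))%E.
Proof.
move=> a1; case ac : (abs_cont w (joint P W)); last by rewrite /KL /renyi ac a1.
rewrite KL_llr // renyi_llr // lee_fin ler_pdivlMl ?subr_gt0 //.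
exact: mean_le_ln_mgf.
Qed.

Lemma renyi_le_KLD a : 1 < a -> (a - 1) * nlnW_sum <= 2^-1 ->
  (renyi a w (joint P W) <= KL w (joint P W) + ((a - 1) * (2 * llr_mom2_bound))%:E)%E.
Proof.
move=> a1 small; case ac : (abs_cont w (joint P W)); last by rewrite /KL /renyi ac a1.
have a10 : 0 < a - 1 by rewrite subr_gt0.
rewrite KL_llr // renyi_llr // -EFinD lee_fin ler_pdivrMl //.
have mom2 : \sum_(t | supp t) w t * llr t ^+ 2 <= llr_mom2_bound.
  apply: le_trans (ler_sum_pred supp _) => [|t]; last by have := sqr_ge0 nlnW_sum; lra.
  by apply: ler_sum => t wt; exact: llr_sqr_le wt (abs_cont_channel_gt0 ac wt).
have tz t : supp t -> (a - 1) * llr t <= 2^-1.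
  move=> wt; apply: le_trans small; rewrite ler_pM2l //.
  exact: llr_le wt (abs_cont_channel_gt0 ac wt).
apply: le_trans (ln_mgf_le w_supp_ge0 w_supp_sum1 tz) _.
rewrite mulrDr lerD2l [leRHS](_ : _ = 2 * (a - 1) ^+ 2 * llr_mom2_bound); last by ring.
by rewrite ler_wpM2l // mulr_ge0 ?sqr_ge0.
Qed.

End InputOutput.
End Channel.

Section GeometricMass.
Variables (R : realType) (X Y : finType) (W : X -> Y -> R).
Hypothesis hW : is_channel W.
Variable P : X -> R.
Hypothesis hP : is_dist P.

Definition channel_moment a y := \sum_x P x * W x y `^ (1 - a).

Definition supported y := [forall x, (0 < P x) ==> (0 < W x y)].

Definition mean_lnW y := \sum_(x | 0 < P x) P x * ln (W x y).

(* The P-weighted geometric mean of W(y|.), which vanishes when some W(y|x) = 0. *)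
Definition geom_mean y := if supported y then expR (mean_lnW y) else 0.

Definition geom_mass := \sum_y geom_mean y.

Definition inv_mass := \sum_(x | 0 < P x) (P x)^-1.

Definition geom_mass_bound a :=
  geom_mass * expR (2 * (1 - a) * nlnW_sum W ^+ 2) + #|Y|%:R * ((1 - a) * inv_mass).

Lemma channel_moment_ge0 a y : 0 <= channel_moment a y.
Proof. by apply: sumr_ge0 => x _; rewrite mulr_ge0 ?powR_ge0 //; exact: hP.1. Qed.

Lemma geom_mean_ge0 y : 0 <= geom_mean y.
Proof. by rewrite /geom_mean; case: ifP => // _; exact: expR_ge0. Qed.

Lemma inv_mass_ge0 : 0 <= inv_mass.
Proof. by apply: sumr_ge0 => x Px; rewrite invr_ge0 ltW. Qed.

Lemma renyi_sum_le_moment a Q : 0 < a < 1 -> is_dist Q ->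
  renyi_sum a (prodPQ P Q) (joint P W) <= \sum_y Q y `^ a * channel_moment a y.
Proof.
move=> /andP[a0 a1] hQ.
set F := fun t : X * Y => P t.1 * (Q t.2 `^ a * W t.1 t.2 `^ (1 - a)).
have F0 t : 0 <= F t by rewrite mulr_ge0 ?mulr_ge0 ?powR_ge0 //; exact: hP.1.
rewrite /renyi_sum (eq_bigr F) => [|t wt]; last first.
  have [P0 _] := prodPQ_gt0 hP hQ wt.
  have PaP : P t.1 `^ a * P t.1 `^ (1 - a) = P t.1.
    by rewrite -powRD ?(gt_eqF P0) ?implybT // addrC subrK powRr1 // ltW.
  by rewrite /prodPQ /joint !powRM ?(hP.1, hQ.1, channel_ge0 hW) // mulrACA PaP.
apply: le_trans (ler_sum_pred _ F0) _.
rewrite -(pair_bigA _ (fun x y => F (x, y))) exchange_big /=.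
apply: ler_sum => y _; rewrite /channel_moment mulr_sumr.
by apply: ler_sum => x _; rewrite mulrCA.
Qed.

Let supp_ge0 x : 0 < P x -> 0 <= P x. Proof. exact: ltW. Qed.
Let supp_sum1 : \sum_(x | 0 < P x) P x = 1. Proof. exact: dist_sum_supp hP. Qed.

Lemma moment_powR_supported a y : 0 < 1 - a -> supported y ->
  channel_moment a y `^ (1 - a)^-1 <= geom_mean y * expR (2 * (1 - a) * nlnW_sum W ^+ 2).
Proof.
set s := 1 - a => s0 /[dup] ys /forallP Wy.
have W0 x : 0 < P x -> 0 < W x y by move=> Px; exact: implyP (Wy x) Px.
have -> : channel_moment a y = mgf (fun x => 0 < P x) P (fun x => ln (W x y)) s.
  rewrite /channel_moment -(sum_supp_mul _ hP.1); apply: eq_bigr => x Px.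
  by rewrite /powR gt_eqF ?W0.
have hz x : 0 < P x -> s * ln (W x y) <= 2^-1.
  move=> Px; apply: (@le_trans _ _ 0); last by lra.
  by rewrite pmulr_rle0 // ln_le0 // channel_le1.
have lnT := ln_mgf_le supp_ge0 supp_sum1 hz.
have V2 : \sum_(x | 0 < P x) P x * ln (W x y) ^+ 2 <= nlnW_sum W ^+ 2.
  rewrite -[leRHS]mul1r -supp_sum1 mulr_suml; apply: ler_sum => x Px.
  by apply: ler_wpM2l; [exact: ltW | exact: (lnW_sqr_le hW (W0 x Px))].
rewrite /powR gt_eqF ?mgf_gt0 // /geom_mean ys -/(mean_lnW y) -expRD ler_expR.
rewrite -(ler_pM2l s0) mulrA mulfV ?gt_eqF // mul1r; apply: le_trans lnT _.
rewrite mulrDr lerD2l [leRHS](_ : _ = 2 * s ^+ 2 * nlnW_sum W ^+ 2); last by ring.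
by rewrite ler_wpM2l // mulr_ge0 ?sqr_ge0.
Qed.

Lemma moment_powR_unsupported a y : 0 < 1 - a -> ~~ supported y ->
  channel_moment a y `^ (1 - a)^-1 <= (1 - a) * inv_mass.
Proof.
set s := 1 - a => s0 /forallPn [x0]; rewrite negb_imply -leNgt => /andP [Px0 Wx0].
have W0 : W x0 y = 0 by apply/eqP; rewrite eq_le Wx0 channel_ge0.
have T1 : channel_moment a y <= 1 - P x0.
  rewrite /channel_moment (bigD1 x0) //= W0 powR0 ?gt_eqF // mulr0 add0r.
  rewrite [leRHS](_ : _ = \sum_(x | x != x0) P x); last first.
    by rewrite -hP.2 (bigD1 x0) //= addrAC subrr add0r.
  apply: ler_sum => x _; apply: ler_piMr; first exact: hP.1.
  have := ge0_ler_powR (ltW s0) _ _ (channel_le1 hW x y).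
  by rewrite powR1 !nnegrE channel_ge0 //; apply.
apply: le_trans (ge0_ler_powR _ _ _ T1) _.
- by rewrite invr_ge0 ltW.
- exact: channel_moment_ge0.
- by rewrite nnegrE subr_ge0 dist_le1.
apply: le_trans (powR_inv_1B_le Px0 (dist_le1 hP x0) s0) _.
apply: ler_wpM2l; first exact: ltW.
rewrite /inv_mass (bigD1 x0) //= lerDl.
by apply: sumr_ge0 => x /andP[Px _]; rewrite invr_ge0 ltW.
Qed.

Lemma sum_moment_powR_le a : 0 < 1 - a ->
  \sum_y channel_moment a y `^ (1 - a)^-1 <= geom_mass_bound a.
Proof.
move=> s0; rewrite /geom_mass_bound /geom_mass; set E := expR _; set c := (1 - a) * inv_mass.
have c0 : 0 <= c by rewrite mulr_ge0 ?inv_mass_ge0 ?ltW.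
apply: (@le_trans _ _ (\sum_y (geom_mean y * E + c))); last first.
  by rewrite big_split /= -mulr_suml sumr_const mulr_natl.
apply: ler_sum => y _; have [ys|yns] := boolP (supported y).
  by apply: le_trans (moment_powR_supported s0 ys) _; rewrite lerDl.
by rewrite /geom_mean (negbTE yns) mul0r add0r moment_powR_unsupported.
Qed.

Lemma renyi_ge_of_bound a l Q : 0 < a < 1 -> geom_mass_bound a < expR (- l) -> is_dist Q ->
  (l%:E <= renyi a (prodPQ P Q) (joint P W))%E.
Proof.
move=> /[dup] aa /andP[a0 a1] hB hQ; have s0 : 0 < 1 - a by rewrite subr_gt0.
rewrite /renyi ltNge (ltW a1) /=; set S := renyi_sum _ _ _.
have [_|Sn0] := eqVneq S 0; first exact: leey.
have Sp : 0 < S by rewrite lt_def Sn0 sumr_ge0 // => t _; rewrite mulr_ge0 ?powR_ge0.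
set N := \sum_y channel_moment a y `^ (1 - a)^-1.
have SN : S <= N `^ (1 - a).
  apply: le_trans (renyi_sum_le_moment aa hQ) _.
  exact: hoelder_dist aa hQ (channel_moment_ge0 a).
have NB : N `^ (1 - a) < expR (- l * (1 - a)).
  rewrite expRM; apply: gt0_ltr_powR; rewrite ?nnegrE ?expR_ge0 //.
    by apply: sumr_ge0 => y _; exact: powR_ge0.
  exact: le_lt_trans (sum_moment_powR_le s0) hB.
have lnS : ln S < - l * (1 - a).
  by rewrite -[ltRHS]expRK ltr_ln ?posrE ?expR_gt0 // (le_lt_trans SN NB).
rewrite lee_fin ler_ndivlMl ?subr_lt0 //; apply: ltW; apply: lt_le_trans lnS _.
by rewrite mulNr -mulrN opprB mulrC.
Qed.

(* The minimizer of Q |-> D(P x Q || P_XY) is proportional to the geometric mean. *)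
Lemma KL_geom_mean : 0 < geom_mass ->
  exists2 Q, is_dist Q & KL (prodPQ P Q) (joint P W) = (- ln geom_mass)%:E.
Proof.
move=> Gp; set Q := fun y => geom_mean y / geom_mass.
have hQ : is_dist Q.
  split=> [y|]; first by rewrite divr_ge0 ?geom_mean_ge0 ?ltW.
  by rewrite -mulr_suml mulfV ?gt_eqF.
have Qpos y : 0 < Q y -> supported y /\ Q y = expR (mean_lnW y) / geom_mass.
  by rewrite /Q /geom_mean; case: ifP => // _; rewrite mul0r ltxx.
have ac : abs_cont (prodPQ P Q) (joint P W).
  apply/forallP => t; apply/implyP => wt; have [P0 Q0] := prodPQ_gt0 hP hQ wt.
  have /forallP /(_ t.1) /implyP /(_ P0) W0 := (Qpos _ Q0).1.
  by rewrite /joint mulr_gt0.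
exists Q => //; rewrite KL_llr //; congr EFin; rewrite (sum_supp_mul _ (prodPQ_ge0 hP hQ)).
rewrite -(pair_bigA _ (fun x y => prodPQ P Q (x, y) * llr W Q (x, y))) /= exchange_big /=.
rewrite -[RHS]mul1r -hQ.2 mulr_suml; apply: eq_bigr => y _; rewrite /prodPQ /=.
have [Q0|] := ltP 0 (Q y); last first.
  move=> Qle0; have -> : Q y = 0 by apply/eqP; rewrite eq_le Qle0 hQ.1.
  by rewrite mul0r big1 // => x _; rewrite mulr0 mul0r.
have [_ eQ] := Qpos _ Q0.
rewrite (eq_bigr (fun x => Q y * ln (Q y) * P x - Q y * (P x * ln (W x y)))) => [|x _]; last first.
  by rewrite /llr /=; ring.
rewrite sumrB -!mulr_sumr hP.2 mulr1 -(sum_supp_mul _ hP.1) -/(mean_lnW y).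
by rewrite [in ln _]eQ ln_div ?posrE ?expR_gt0 // expRK; ring.
Qed.

End GeometricMass.

Section ExtendedLimits.
Variable R : realType.
Local Open Scope ereal_scope.

Lemma cvge_near_bounds {T} {F : set_system T} {FF : Filter F} (f : T -> \bar R) (u : \bar R) :
  (forall l : R, l%:E < u -> \forall x \near F, l%:E <= f x) ->
  (forall r : R, u < r%:E -> \forall x \near F, f x <= r%:E) -> f @ F --> u.
Proof.
case: u => [u| |] lb ub; last 2 first.
- by apply/cvgeyPge => A; apply: lb; exact: ltry.
- by apply/cvgeNyPle => A; apply: ub; exact: ltNyr.
have fin : \forall x \near F, f x \is a fin_num.
  apply: filterS2 (lb (u - 1)%R _) (ub (u + 1)%R _) => [x||]; last 2 first.
  - by rewrite lte_fin; lra.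
  - by rewrite lte_fin; lra.
  by case: (f x).
apply/fine_cvgP; split=> //; apply/cvgrPdist_lt => e e0.
have e20 : (0 < e / 2)%R by rewrite divr_gt0.
have L : (u - e / 2)%:E < u%:E by rewrite lte_fin; lra.
have U : u%:E < (u + e / 2)%:E by rewrite lte_fin; lra.
apply: filterS2 (lb _ L) (ub _ U) => x /=; case: (f x) => // r; rewrite !lee_fin /= => ler ler'.
by rewrite ltr_norml; apply/andP; split; lra.
Qed.

Lemma lee_ereal_inf_image (T : Type) (A : set T) (f g : T -> \bar R) :
  (forall x, A x -> f x <= g x) -> ereal_inf (f @` A) <= ereal_inf (g @` A).
Proof.
move=> fg; apply: le_ereal_inf_tmp => _ [x Ax <-].
by apply: le_trans (fg x Ax); apply: ereal_inf_lbound; exists x.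
Qed.

Lemma lee_ereal_sup_image (T : Type) (A : set T) (f g : T -> \bar R) :
  (forall x, A x -> f x <= g x) -> ereal_sup (f @` A) <= ereal_sup (g @` A).
Proof.
move=> fg; apply: ge_ereal_sup => _ [x Ax <-].
by apply: le_trans (fg x Ax) _; apply: ereal_sup_ubound; exists x.
Qed.

End ExtendedLimits.

Lemma cvg_affine_at_right (R : realType) (u c : R) :
  u + (a - 1) * c @[a --> 1^'+] --> u.
Proof.
apply: cvg_at_right_filter; rewrite -[X in _ --> X]addr0 -(mul0r c) -(subrr 1).
by apply: cvgD; [exact: cvg_cst | apply: cvgM; [apply: cvgB; [exact: cvg_id|]|]; exact: cvg_cst].
Qed.

Lemma geom_mass_bound_cvg (R : realType) (X Y : finType) (W : X -> Y -> R) (P : X -> R) :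
  geom_mass_bound W P a @[a --> 1^'-] --> geom_mass W P.
Proof.
apply: cvg_at_left_filter; rewrite /geom_mass_bound.
set G := geom_mass W P; set L := nlnW_sum W ^+ 2; set K := inv_mass P.
suff : G * expR (2 * (1 - a) * L) + #|Y|%:R * ((1 - a) * K) @[a --> (1 : R)] -->
    G * expR (2 * (1 - 1) * L) + #|Y|%:R * ((1 - 1) * K).
  by rewrite subrr !mulr0 !mul0r expR0 mulr1 mulr0 addr0.
have cvg1B : (1 - a) @[a --> (1 : R)] --> (1 - 1 : R).
  by apply: cvgB; [exact: cvg_cst | exact: cvg_id].
apply: cvgD; apply: cvgM; try exact: cvg_cst.
  apply: continuous_cvg; first exact: continuous_expR.
  by apply: cvgM; [apply: cvgM; [exact: cvg_cst | exact: cvg1B] | exact: cvg_cst].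
by apply: cvgM; [exact: cvg1B | exact: cvg_cst].
Qed.

Section Limits.
Variables (R : realType) (X Y : finType) (W : X -> Y -> R).
Hypothesis hW : is_channel W.
Local Open Scope ereal_scope.

Let L := nlnW_sum W.
Let C := (2 * llr_mom2_bound W)%R.

Lemma U_alpha_le_U a : (a < 1)%R -> U_alpha W a <= U W.
Proof.
move=> a1; apply: lee_ereal_sup_image => P hP; apply: lee_ereal_inf_image => Q hQ.
exact: renyi_le_KL.
Qed.

Lemma U_le_U_alpha a : (1 < a)%R -> U W <= U_alpha W a.
Proof.
move=> a1; apply: lee_ereal_sup_image => P hP; apply: lee_ereal_inf_image => Q hQ.
exact: KL_le_renyi.
Qed.

Lemma U_alpha_le_UD a : (1 < a)%R -> ((a - 1) * L <= 2^-1)%R ->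
  U_alpha W a <= U W + ((a - 1) * C)%:E.
Proof.
move=> a1 small; apply: ge_ereal_sup => _ [P hP <-].
set KLinf := ereal_inf ((fun Q => KL (prodPQ P Q) (joint P W)) @` @dists R Y).
set Rinf := ereal_inf ((fun Q => renyi a (prodPQ P Q) (joint P W)) @` @dists R Y).
suff : Rinf - ((a - 1) * C)%:E <= KLinf.
  rewrite leeBlDr // => /le_trans; apply; rewrite leeD2r //.
  by apply: ereal_sup_ubound; exists P.
apply: le_ereal_inf_tmp => _ [Q hQ <-]; rewrite leeBlDr //.
apply: le_trans (renyi_le_KLD hW hP hQ a1 small).
by apply: ereal_inf_lbound; exists Q.
Qed.

Lemma U_alpha_near_ge l : l%:E < U W -> \forall a \near 1^'-, l%:E <= U_alpha W a.
Proof.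
move=> lU; have [_ [P hP <-] lP] := ereal_sup_gt lU.
set G := geom_mass W P.
have G_lt : (G < expR (- l))%R.
  have [->|Gn0] := eqVneq G 0%R; first exact: expR_gt0.
  have Gp : (0 < G)%R by rewrite lt_def Gn0 sumr_ge0 // => y _; exact: geom_mean_ge0.
  have [Q hQ KLQ] := KL_geom_mean hW hP Gp.
  have : l%:E < (- ln G)%:E.
    by rewrite -KLQ; apply: lt_le_trans lP _; apply: ereal_inf_lbound; exists Q.
  by rewrite lte_fin ltrNr -ltr_expR lnK ?posrE.
near=> a.
have aa : (0 < a < 1)%R by apply/andP; split; near: a; [exact: nbhs_left_gt | exact: nbhs_left_lt].
apply: le_trans (ereal_sup_ubound _); last by exists P.
apply: le_ereal_inf_tmp => _ [Q hQ <-]; apply: renyi_ge_of_bound => //.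
by near: a; exact: (cvgr_lt _ (@geom_mass_bound_cvg _ _ _ W P) _ G_lt).
Unshelve. all: by end_near.
Qed.

Lemma U_alpha_cvg_left : U_alpha W a @[a --> 1^'-] --> U W.
Proof.
apply: cvge_near_bounds => [l|r rU]; first exact: U_alpha_near_ge.
near=> a; apply: le_trans (ltW rU); apply: U_alpha_le_U.
by near: a; exact: nbhs_left_lt.
Unshelve. all: by end_near.
Qed.

Lemma U_alpha_cvg_right : U_alpha W a @[a --> 1^'+] --> U W.
Proof.
have near_1 : \forall a \near 1^'+, (1 < a)%R /\ ((a - 1) * L <= 2^-1)%R.
  have half_gt0 : (0 < 2^-1 :> R)%R by rewrite invr_gt0.
  near=> a; split; first by near: a; exact: nbhs_right_gt.
  rewrite -[leLHS]add0r; apply: ltW; near: a.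
  exact: (cvgr_lt _ (@cvg_affine_at_right R 0 L) _ half_gt0).
have ub : \forall a \near 1^'+, U_alpha W a <= U W + ((a - 1) * C)%:E.
  by apply: filterS near_1 => a [a1 small]; exact: U_alpha_le_UD.
apply: cvge_near_bounds => [l lU|r].
  by apply: filterS near_1 => a [a1 _]; exact: le_trans (ltW lU) (U_le_U_alpha a1).
case: (U W) ub => [u| |] // ub Ur; last first.
  by apply: filterS ub => a; rewrite addNye leeNy_eq => /eqP ->; rewrite leNye.
move: Ur; rewrite lte_fin => ur.
apply: filterS2 ub (cvgr_lt _ (@cvg_affine_at_right R u C) _ ur) => a h /ltW.
by rewrite -lee_fin EFinD; exact: le_trans.
Unshelve. all: by end_near.
Qed.

End Limits.

Theorem mainTheorem14 (R : realType) (X Y : finType) (W : X -> Y -> R)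
  (hW : is_channel W) :
  (U_alpha W a @[a --> 1^'-] --> U W) /\ (U_alpha W a @[a --> 1^'+] --> U W).
Proof. by split; [exact: U_alpha_cvg_left | exact: U_alpha_cvg_right]. Qed.
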